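(* Let $\mathcal{A}$, $\mathbf{r}$, $V_d$ and $C_{2^m}$ be as below. For every $m\ge3$, $\pi^{-1}(V_{2^m})=V_{2^{m+1}}$, where $\pi:C_{2^{m+1}}\to C_{2^m}$ is reduction modulo $2^m$.
   Context: Let $\mathcal{P}$ be a primitive integral Apollonian 3-circle packing (start with three mutually tangent circles; in each curvilinear triangular gap bounded by three mutually tangent circles inscribe the unique three circles such that the six circles involved are each tangent to four others and disjoint from the remaining one; iterate ad infinitum; integral means all curvatures are integers, primitive means their gcd is 1). Fix mutually tangent circles $C_1,C_2,C_3$ of $\mathcal{P}$ with curvatures $\kappa_1,\kappa_2,\kappa_3$ and the three circles $C_{1'},C_{2'},C_{3'}$ inscribed in one of their gaps, labeled so that $C_{i'}$ is disjoint from $C_i$; then $\kappa_1+\kappa_{1'}=\kappa_2+\kappa_{2'}=\kappa_3+\kappa_{3'}=2w$, and set $\mathbf{r}=(\kappa_1,\kappa_2,\kappa_3,w)^T$. Let $Q(\kappa_1,\kappa_2,\kappa_3,w)=w^2-2w(\kappa_1+\kappa_2+\kappa_3)+\kappa_1^2+\kappa_2^2+\kappa_3^2$. Let $\tilde{\mathcal{A}}\subset GL(4,\mathbb{Z})$ be generated by the eight matrices (rows separated by semicolons) $S_{123}=(1,0,0,0;0,1,0,0;0,0,1,0;2,2,2,-1)$, $S_{1'23}=(-3,4,4,4;0,1,0,0;0,0,1,0;-2,2,2,3)$, $S_{12'3}=(1,0,0,0;4,-3,4,4;0,0,1,0;2,-2,2,3)$, $S_{123'}=(1,0,0,0;0,1,0,0;4,4,-3,4;2,2,-2,3)$,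 $S_{1'2'3}=(-3,-4,4,12;-4,-3,4,12;0,0,1,0;-2,-2,2,7)$, $S_{1'23'}=(-3,4,-4,12;0,1,0,0;-4,4,-3,12;-2,2,-2,7)$, $S_{12'3'}=(1,0,0,0;4,-3,-4,12;4,-4,-3,12;2,-2,-2,7)$, $S_{1'2'3'}=(-3,-4,-4,20;-4,-3,-4,20;-4,-4,-3,20;-2,-2,-2,11)$, and let $\mathcal{A}$ be its index-2 subgroup of products of an even number of these generators. Let $V=\mathcal{A}\cdot\mathbf{r}\subset\mathbb{Z}^4$ and $V_d$ its reduction modulo $d$. For $m\ge1$, $C_{2^m}$ is the set of $\mathbf{v}\in(\mathbb{Z}/2^m\mathbb{Z})^4$ such that some integer lift $\mathbf{w}$ of $\mathbf{v}$ satisfies $Q(\mathbf{w})\equiv0\pmod{2^{m+1}}$. *)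

From mathcomp Require Import all_boot all_order all_algebra.
Set Implicit Arguments. Unset Strict Implicit. Unset Printing Implicit Defensive.
Import Order.TTheory GRing.Theory Num.Theory.
Local Open Scope ring_scope.

Definition mx_of_rows (l : seq (seq int)) : 'M[int]_4 :=
  \matrix_(i < 4, j < 4) nth 0 (nth [::] l i) j.

Definition vec4 (a b c d : int) : 'cV[int]_4 :=
  \col_(i < 4) nth 0 [:: a; b; c; d] i.

Definition cmp (v : 'cV[int]_4) (i : nat) : int := v (inord i) 0.

Definition S123  := mx_of_rows [:: [:: 1; 0; 0; 0]; [:: 0; 1; 0; 0]; [:: 0; 0; 1; 0]; [:: 2; 2; 2; -1]].
Definition S1'23 := mx_of_rows [:: [:: -3; 4; 4; 4]; [:: 0; 1; 0; 0]; [:: 0; 0; 1; 0]; [:: -2; 2; 2; 3]].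
Definition S12'3 := mx_of_rows [:: [:: 1; 0; 0; 0]; [:: 4; -3; 4; 4]; [:: 0; 0; 1; 0]; [:: 2; -2; 2; 3]].
Definition S123' := mx_of_rows [:: [:: 1; 0; 0; 0]; [:: 0; 1; 0; 0]; [:: 4; 4; -3; 4]; [:: 2; 2; -2; 3]].
Definition S1'2'3 := mx_of_rows [:: [:: -3; -4; 4; 12]; [:: -4; -3; 4; 12]; [:: 0; 0; 1; 0]; [:: -2; -2; 2; 7]].
Definition S1'23' := mx_of_rows [:: [:: -3; 4; -4; 12]; [:: 0; 1; 0; 0]; [:: -4; 4; -3; 12]; [:: -2; 2; -2; 7]].
Definition S12'3' := mx_of_rows [:: [:: 1; 0; 0; 0]; [:: 4; -3; -4; 12]; [:: 4; -4; -3; 12]; [:: 2; -2; -2; 7]].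
Definition S1'2'3' := mx_of_rows [:: [:: -3; -4; -4; 20]; [:: -4; -3; -4; 20]; [:: -4; -4; -3; 20]; [:: -2; -2; -2; 11]].

Definition gens : seq 'M[int]_4 :=
  [:: S123; S1'23; S12'3; S123'; S1'2'3; S1'23'; S12'3'; S1'2'3'].

(* The index-2 subgroup A: products of an even number of generators.
   (Each generator is an involution, so this is the set of even-length words.) *)
Definition inA (M : 'M[int]_4) : Prop :=
  exists2 s : seq 'M[int]_4, all (fun g => g \in gens) s && ~~ odd (size s)
    & M = foldr (@mulmx int 4 4 4) 1%:M s.

Definition Qf (v : 'cV[int]_4) : int :=
  let k1 := cmp v 0 in let k2 := cmp v 1 in let k3 := cmp v 2 in let w := cmp v 3 in
  w ^+ 2 - 2 * w * (k1 + k2 + k3) + k1 ^+ 2 + k2 ^+ 2 + k3 ^+ 2.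

Definition eqmodv (d : int) (u v : 'cV[int]_4) : Prop :=
  forall i : 'I_4, (u i ord0 == v i ord0 %[mod d])%Z.

(* x (an integer representative) lies in V_d = A.r mod d *)
Definition inV (r : 'cV[int]_4) (d : int) (x : 'cV[int]_4) : Prop :=
  exists2 g, inA g & eqmodv d (g *m r) x.

Definition inC (m : nat) (x : 'cV[int]_4) : Prop :=
  exists w : 'cV[int]_4, eqmodv (2 ^ m)%:Z w x /\ (Qf w == 0 %[mod (2 ^ m.+1)%:Z])%Z.

From mathcomp Require Import all_boot all_order all_algebra ring zify.
Set Implicit Arguments. Unset Strict Implicit. Unset Printing Implicit Defensive.
Import Order.TTheory GRing.Theory Num.Theory.
Local Open Scope ring_scope.

(* The forward inclusion is reduction modulo 2^m.  Conversely, let x lie over g r in V_{2^m}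
   (g in A) and let w0 be a lift of x with Q(w0) = 0 mod 2^{m+2}.  Then g^{-1} w0 = r + 2^m u,
   and as Q is A-invariant with Q(r) = 0, Q(w0) = 2^{m+1} B(r,u) + 2^{2m} Q(u) forces the
   polar form B(r,u) to be even.  Six even words W_i in the generators satisfy
   W_i = 1 + 8 Z_i, so by repeated squaring W_i^(2^(m-3)) = 1 + 2^m Z_i mod 2^{m+1}, and a
   product h of such powers sends r to r + 2^m (sum_i b_i Z_i) r mod 2^{m+1}.  Primitivity and
   Q(r) = 0 make r non-constant mod 2, and a finite computation over parity classes shows that
   the vectors (sum_i b_i Z_i) r, b in {0,1}^6, then reach every u with B(r,u) even, mod 2.
   Hence x = g h r mod 2^{m+1}. *)

Definition colv (s : seq int) : 'cV[int]_4 := \col_(i < 4) s`_i.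

Definition entries (v : 'cV[int]_4) : seq int := [seq cmp v i | i <- iota 0 4].

Lemma colv_entries v : colv (entries v) = v.
Proof.
apply/matrixP => i j; rewrite !mxE (ord1 j) /cmp.
by case: i => [[|[|[|[|//]]]] ?] /=; congr (v _ _); apply/val_inj; rewrite /= inordK.
Qed.

Lemma entries_colv s : size s = 4%N -> entries (colv s) = s.
Proof.
by case: s => [|a [|b [|c [|d [|//]]]]] // _; rewrite /entries /cmp /= !mxE !inordK.
Qed.

Lemma cmpD u v i : cmp (u + v) i = cmp u i + cmp v i.
Proof. by rewrite /cmp mxE. Qed.

Lemma cmpZ d v i : cmp (d *: v) i = d * cmp v i.
Proof. by rewrite /cmp mxE. Qed.

(* List-level matrix arithmetic: unlike [mulmx] and big operators, it reduces under
   [vm_compute]. *)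
Fixpoint dot (s t : seq int) : int :=
  if s is x :: s' then if t is y :: t' then x * y + dot s' t' else 0 else 0.

Lemma sum_nth_dot n s t : (size s <= n)%N -> \sum_(j < n) s`_j * t`_j = dot s t.
Proof.
elim: s t n => [|x s IH] t n le_s_n.
  by rewrite big1 // => j _; rewrite nth_nil mul0r.
case: n le_s_n => // n le_s_n; rewrite big_ord_recl.
case: t => [|y t] /=; last by rewrite IH.
by rewrite big1 ?mulr0 ?addr0 // => j _; rewrite ?nth_nil mulr0.
Qed.

Definition mulrows (l : seq (seq int)) (t : seq int) : seq int := [seq dot s t | s <- l].

Lemma nth_mulrows l t k : (mulrows l t)`_k = dot (nth [::] l k) t.
Proof. by elim: l k => [|s l IH] [|k] //=; rewrite nth_nil. Qed.

Definition column (l : seq (seq int)) (j : nat) : seq int := [seq s`_j | s <- l].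

Lemma nth_column l j k : (column l j)`_k = (nth [::] l k)`_j.
Proof. by elim: l k => [|s l IH] [|k] //=; rewrite ?nth_nil. Qed.

Lemma size_nth_row l i :
  all (fun s : seq int => size s <= 4)%N l -> (size (nth [::] l i) <= 4)%N.
Proof. by elim: l i => [|s l IH] [|i] //= /andP[s4 l4]; last exact: IH. Qed.

Lemma mx_of_rows_mulv l t : all (fun s : seq int => size s <= 4)%N l ->
  mx_of_rows l *m colv t = colv (mulrows l t).
Proof.
move=> l4; apply/matrixP => i j; rewrite !mxE.
under eq_bigr do rewrite !mxE.
rewrite sum_nth_dot ?size_nth_row //.
by rewrite nth_mulrows.
Qed.

Lemma mx_of_rows_mul l1 l2 : all (fun s : seq int => size s <= 4)%N l1 ->
  mx_of_rows l1 *m mx_of_rows l2 =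
  mx_of_rows [seq [seq dot s (column l2 j) | j <- iota 0 4] | s <- l1].
Proof.
move=> l4; apply/matrixP => i j; rewrite !mxE.
under eq_bigr do rewrite !mxE -(nth_column l2).
rewrite sum_nth_dot ?size_nth_row //.
by elim: l1 {l4} (i : nat) => [|s l IH] [|k] //=; rewrite ?nth_nil //;
  case: (j) => [[|[|[|[|]]]] ?].
Qed.

Lemma eqmodvP d u v : eqmodv d u v <-> exists z : 'cV[int]_4, u = v + d *: z.
Proof.
split=> [duv | [z ->] i]; last by rewrite !mxE eqz_mod_dvd addrC addrK dvdz_mulr.
exists (\col_i ((u i ord0 - v i ord0) %/ d)%Z); apply/matrixP => i j.
by rewrite (ord1 j) !mxE mulrC divzK -?eqz_mod_dvd // addrC subrK.
Qed.

Lemma eqmodv_sym d u v : eqmodv d u v -> eqmodv d v u.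
Proof. by move=> duv i; rewrite eq_sym. Qed.

Lemma eqmodv_trans d u v w : eqmodv d u v -> eqmodv d v w -> eqmodv d u w.
Proof. by move=> duv dvw i; rewrite (eqP (duv i)). Qed.

Lemma eqmodv_dvd d e u v : (e %| d)%Z -> eqmodv d u v -> eqmodv e u v.
Proof.
move=> ed /eqmodvP[z ->]; apply/eqmodvP; case/dvdzP: ed => c ->.
by exists (c *: z); rewrite scalerA mulrC.
Qed.

Lemma eqmodv_mulmx d (M : 'M[int]_4) u v : eqmodv d u v -> eqmodv d (M *m u) (M *m v).
Proof.
by case/eqmodvP=> z ->; apply/eqmodvP; exists (M *m z); rewrite mulmxDr scalemxAr.
Qed.

Lemma eqmodv_addl d w u v : eqmodv d u v -> eqmodv d (w + u) (w + v).
Proof. by case/eqmodvP=> z ->; apply/eqmodvP; exists z; rewrite addrA. Qed.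

Lemma eqmodv_scale c d u v : eqmodv d u v -> eqmodv (c * d) (c *: u) (c *: v).
Proof.
by case/eqmodvP=> z ->; apply/eqmodvP; exists z; rewrite scalerDr scalerA.
Qed.

Definition qform (s : seq int) : int :=
  let k1 := s`_0 in let k2 := s`_1 in let k3 := s`_2 in let w := s`_3 in
  w ^+ 2 - 2 * w * (k1 + k2 + k3) + k1 ^+ 2 + k2 ^+ 2 + k3 ^+ 2.

Definition bform (s t : seq int) : int :=
  let k1 := s`_0 in let k2 := s`_1 in let k3 := s`_2 in let w := s`_3 in
  let l1 := t`_0 in let l2 := t`_1 in let l3 := t`_2 in let x := t`_3 in
  w * x - w * (l1 + l2 + l3) - x * (k1 + k2 + k3) + k1 * l1 + k2 * l2 + k3 * l3.

Definition Bf (u v : 'cV[int]_4) : int := bform (entries u) (entries v).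

Lemma QfE v : Qf v = qform (entries v).
Proof. by []. Qed.

Lemma QfDZ u v d : Qf (u + d *: v) = Qf u + 2 * d * Bf u v + d ^+ 2 * Qf v.
Proof. by rewrite !QfE /Bf /qform /bform /= !cmpD !cmpZ; ring. Qed.

Lemma BfDZ u u' v v' d :
  Bf (u + d *: u') (v + d *: v') = Bf u v + d * (Bf u v' + Bf u' v + d * Bf u' v').
Proof. by rewrite /Bf /bform /= !cmpD !cmpZ; ring. Qed.

Lemma Qf_eqmodv d u v : eqmodv d u v -> (Qf u == Qf v %[mod d])%Z.
Proof.
case/eqmodvP=> z ->; rewrite QfDZ eqz_mod_dvd.
have -> : Qf v + 2 * d * Bf v z + d ^+ 2 * Qf z - Qf v = d * (2 * Bf v z + d * Qf z).
  by ring.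
exact/dvdz_mulr/dvdzz.
Qed.

Lemma Bf_eqmodv d u u' v v' : eqmodv d u u' -> eqmodv d v v' ->
  (Bf u v == Bf u' v' %[mod d])%Z.
Proof.
case/eqmodvP=> z ->; case/eqmodvP=> z' ->.
by rewrite BfDZ eqz_mod_dvd addrC addKr; apply/dvdz_mulr/dvdzz.
Qed.

Section CongruentToIdentity.

Variable n : nat.
Implicit Types (d : int) (A B X Y h : 'M[int]_n.+1).

Definition mx_congr1 d X h : Prop := exists Y, h = 1 + d *: (X + 2 *: Y).

Lemma mulr_1addZ d A B : (1 + d *: A) * (1 + d *: B) = 1 + d *: (A + B + d *: (A * B)).
Proof.
rewrite mulrDr mulr1 !mulrDl mul1r -scalerAl -scalerAr scalerA.
move: (A * B) => M; apply/matrixP => i j; rewrite !mxE; ring.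
Qed.

Lemma mx_congr1_id d : mx_congr1 d 0 1.
Proof. by exists 0; rewrite scaler0 addr0 scaler0 addr0. Qed.

Lemma mx_congr1_mul d X X' h h' : (2 %| d)%Z ->
  mx_congr1 d X h -> mx_congr1 d X' h' -> mx_congr1 d (X + X') (h * h').
Proof.
case/dvdzP=> e ->{d} [Y ->] [Y' ->]; rewrite mulr_1addZ.
exists (Y + Y' + e *: ((X + 2 *: Y) * (X' + 2 *: Y'))); congr (1 + _ *: _).
move: ((X + 2 *: Y) * _) => M; apply/matrixP => i j; rewrite !mxE; ring.
Qed.

Lemma mx_congr1_expn d X h k :
  (2 %| d)%Z -> mx_congr1 d X h -> mx_congr1 d (X *+ k) (h ^+ k).
Proof.
move=> d2 dXh; elim: k => [|k IH]; first by rewrite mulr0n expr0; exact: mx_congr1_id.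
by rewrite exprS mulrS; exact: mx_congr1_mul.
Qed.

Lemma mx_congr1_sqr d X h : (4 %| d)%Z -> mx_congr1 d X h -> mx_congr1 (2 * d) X (h ^+ 2).
Proof.
case/dvdzP=> e ->{d} [Y ->]; rewrite expr2 mulr_1addZ.
exists (Y + e *: ((X + 2 *: Y) * (X + 2 *: Y))).
move: ((X + 2 *: Y) * _) => M; apply/matrixP => i j; rewrite !mxE; ring.
Qed.

Lemma mx_congr1_expn2 d X h k : (4 %| d)%Z ->
  mx_congr1 d X h -> mx_congr1 (2 ^+ k * d) X (h ^+ (2 ^ k)).
Proof.
move=> d4 dXh; elim: k => [|k IH]; first by rewrite expr0 mul1r expr1.
rewrite exprS -mulrA expnS mulnC exprM; apply: mx_congr1_sqr IH.
exact: dvdz_mull.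
Qed.

Lemma mx_congr1_big d (I : Type) (r : seq I) (F G : I -> 'M[int]_n.+1) :
  (2 %| d)%Z -> (forall i, mx_congr1 d (F i) (G i)) ->
  mx_congr1 d (\sum_(i <- r) F i) (\prod_(i <- r) G i).
Proof.
move=> d2 dFG; apply: (big_ind2 (mx_congr1 d)) => //; first exact: mx_congr1_id.
by move=> ? ? ? ?; exact: mx_congr1_mul.
Qed.

End CongruentToIdentity.

Lemma mx_congr1_mulv d X h (r : 'cV[int]_4) :
  @mx_congr1 3 d X h -> eqmodv (2 * d) (h *m r) (r + d *: (X *m r)).
Proof.
case=> Y ->; apply/eqmodvP; exists (Y *m r).
rewrite mulmxDl -idmxE mul1mx -scalemxAl mulmxDl -scalemxAl.
move: (X *m r) (Y *m r) => Xr Yr; apply/matrixP => i j; rewrite !mxE; ring.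
Qed.

Ltac mx_entrywise := apply/matrixP;
  case=> [[|[|[|[|//]]]] ?]; case=> [[|[|[|[|//]]]] ?];
  rewrite !mxE; vm_compute; reflexivity.

Lemma gens_ind (P : 'M[int]_4 -> Prop) :
  P S123 -> P S1'23 -> P S12'3 -> P S123' -> P S1'2'3 -> P S1'23' -> P S12'3' -> P S1'2'3' ->
  {in gens, forall g, P g}.
Proof.
move=> ? ? ? ? ? ? ? ? g; rewrite !inE.
by do ![case/orP=> [/eqP-> //|]]; move/eqP->.
Qed.

Lemma gens_invol : {in gens, forall g, g * g = 1}.
Proof. by apply: gens_ind; rewrite -mulmxE -idmxE mx_of_rows_mul //; mx_entrywise. Qed.

Lemma gens_Qf v : {in gens, forall g, Qf (g *m v) = Qf v}.
Proof.
rewrite -(colv_entries v).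
by apply: gens_ind; rewrite mx_of_rows_mulv // !QfE !entries_colv // /qform /=; ring.
Qed.

Lemma foldr_mulmxE (s : seq 'M[int]_4) : foldr (@mulmx int 4 4 4) 1%:M s = \prod_(g <- s) g.
Proof. by elim: s => [|g s IH] /=; rewrite ?big_nil ?big_cons ?IH -?mulmxE. Qed.

Definition even_word (s : seq 'M[int]_4) : bool := all (mem gens) s && ~~ odd (size s).

Lemma inAE M : inA M <-> exists2 s, even_word s & M = \prod_(g <- s) g.
Proof. by split=> -[s es ->]; exists s; rewrite ?foldr_mulmxE. Qed.

Lemma inA1 : inA 1.
Proof. by apply/inAE; exists [::]; rewrite ?big_nil. Qed.

Lemma inA_mul g h : inA g -> inA h -> inA (g * h).
Proof.
case/inAE=> s /andP[gs es] ->; case/inAE=> t /andP[gt et] ->; apply/inAE.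
exists (s ++ t); last by rewrite big_cat.
by rewrite /even_word all_cat gs gt size_cat oddD (negbTE es) (negbTE et).
Qed.

Lemma inA_expn g k : inA g -> inA (g ^+ k).
Proof.
move=> Ag; elim: k => [|k IH]; first by rewrite expr0; exact: inA1.
by rewrite exprS; exact: inA_mul.
Qed.

Lemma prod_rev_gens s : all (mem gens) s -> \prod_(g <- rev s) g * \prod_(g <- s) g = 1.
Proof.
elim: s => [|g s IH] /=; first by rewrite big_nil mulr1.
case/andP=> gg gs; rewrite rev_cons -cats1 big_cat big_seq1 big_cons.
by rewrite -mulrA (mulrA g) gens_invol // mul1r IH.
Qed.

Lemma inA_inverse g : inA g -> exists2 g', inA g' & g' * g = 1 /\ g * g' = 1.
Proof.
case/inAE=> s /andP[gs es] ->; exists (\prod_(h <- rev s) h).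
  by apply/inAE; exists (rev s); rewrite // /even_word all_rev gs size_rev.
split; first exact: prod_rev_gens.
by rewrite -{1}(revK s) prod_rev_gens // all_rev.
Qed.

Lemma inA_Qf g v : inA g -> Qf (g *m v) = Qf v.
Proof.
case/inAE=> s /andP[gs _] ->; elim: s gs => [|h s IH] /=; first by rewrite big_nil mul1mx.
by case/andP=> hg gs; rewrite big_cons -mulmxE -mulmxA gens_Qf // IH.
Qed.

Definition lift_words : seq (seq 'M[int]_4) :=
  [:: [:: S123; S1'23; S123; S1'23]; [:: S123; S1'23; S12'3; S1'2'3];
      [:: S123; S1'23; S123'; S1'23']; [:: S123; S12'3; S123; S12'3];
      [:: S123; S12'3; S123'; S12'3']; [:: S123; S123'; S123; S123']].

Definition lift_dirs : seq (seq (seq int)) :=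
  [:: [:: [:: -1; 3; 3; 1]; [:: 0; 0; 0; 0]; [:: 0; 0; 0; 0]; [:: -1; 4; 4; 1]];
      [:: [:: -5; -10; 11; 26]; [:: -1; -2; 2; 5]; [:: 0; 0; 0; 0]; [:: -9; -18; 20; 47]];
      [:: [:: -5; 11; -10; 26]; [:: 0; 0; 0; 0]; [:: -1; 2; -2; 5]; [:: -9; 20; -18; 47]];
      [:: [:: 0; 0; 0; 0]; [:: 3; -1; 3; 1]; [:: 0; 0; 0; 0]; [:: 4; -1; 4; 1]];
      [:: [:: 0; 0; 0; 0]; [:: 11; -5; -10; 26]; [:: 2; -1; -2; 5]; [:: 20; -9; -18; 47]];
      [:: [:: 0; 0; 0; 0]; [:: 0; 0; 0; 0]; [:: 3; 3; -1; 1]; [:: 4; 4; -1; 1]]].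

(* Indices [i >= 6] give the empty word and the zero matrix, so [lift_mxE] needs no bound
   on [i]. *)
Definition lift_mx (i : nat) : 'M[int]_4 := \prod_(g <- nth [::] lift_words i) g.

Definition lift_dir (i : nat) : 'M[int]_4 := mx_of_rows (nth [::] lift_dirs i).

Lemma lift_mx_inA i : inA (lift_mx i).
Proof.
apply/inAE; exists (nth [::] lift_words i) => //.
by do 6?[case: i => [|i]]; rewrite /even_word /= ?nth_nil // /gens !inE !eqxx ?orbT.
Qed.

Lemma lift_mxE i : lift_mx i = 1 + 8 *: lift_dir i.
Proof.
rewrite /lift_mx /lift_dir -idmxE.
do 6?[case: i => [|i]];
  rewrite /= ?nth_nil ?big_nil ?big_cons ?big_nil ?mulr1 -?mulmxE ?mx_of_rows_mul //;
  mx_entrywise.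
Qed.

Fixpoint tuples {T : Type} (xs : seq T) (n : nat) : seq (seq T) :=
  if n is n'.+1 then [seq x :: s | x <- xs, s <- tuples xs n'] else [:: [::]].

Lemma mem_tuples (T : eqType) (xs : seq T) s : all (mem xs) s -> s \in tuples xs (size s).
Proof.
elim: s => [|x s IH] //= /andP[xx sx]; apply/allpairsP.
by exists (x, s); split=> //; exact: IH.
Qed.

Definition const_mod2 (s : seq int) : bool :=
  [&& (s`_0 == s`_3 %[mod 2])%Z, (s`_1 == s`_3 %[mod 2])%Z & (s`_2 == s`_3 %[mod 2])%Z].

Definition admissible (a c : seq int) : bool :=
  [&& ~~ const_mod2 a, (2 %| qform a)%Z & (2 %| bform a c)%Z].

Definition lift_comb_entry (b : seq nat) (a : seq int) (j : nat) : int :=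
  foldr +%R 0 [seq (nth 0 b i)%:R * (mulrows (nth [::] lift_dirs i) a)`_j | i <- iota 0 6].

Definition reaches_mod2 (a c : seq int) (b : seq nat) : bool :=
  all (fun j => (2 %| lift_comb_entry b a j - c`_j)%Z) (iota 0 4).

Definition parity_cover_check : bool :=
  all (fun a => all (fun c =>
        admissible a c ==> has (reaches_mod2 a c) (tuples [:: 0%N; 1%N] 6))
      (tuples [:: 0; 1] 4)) (tuples [:: 0; 1] 4).

Lemma parity_cover_check_true : parity_cover_check.
Proof. by vm_compute. Qed.

Definition lift_comb (b : seq nat) : 'M[int]_4 := \sum_(i < 6) lift_dir i *+ nth 0 b i.

Lemma lift_dir_rows i : all (fun s : seq int => size s <= 4)%N (nth [::] lift_dirs i).
Proof. by do 6?[case: i => [|i]]; rewrite //= nth_nil. Qed.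

Lemma lift_comb_mulv b a (j : 'I_4) : (lift_comb b *m colv a) j 0 = lift_comb_entry b a j.
Proof.
rewrite /lift_comb mulmx_suml summxE.
under eq_bigr do rewrite -scaler_nat -scalemxAl mx_of_rows_mulv ?lift_dir_rows // !mxE.
by rewrite /lift_comb_entry foldrE big_map -[iota 0 6]/(index_iota 0 6) big_mkord.
Qed.

Definition parity_list (v : 'cV[int]_4) : seq int := [seq (x %% 2)%Z | x <- entries v].

Lemma nth_entries v (i : 'I_4) : (entries v)`_i = v i 0.
Proof. by rewrite (nth_map 0%N) ?size_iota // nth_iota // /cmp inord_val. Qed.

Lemma eqmodv_parity v : eqmodv 2 v (colv (parity_list v)).
Proof. by move=> i; rewrite mxE (nth_map 0) ?size_map ?size_iota // nth_entries modz_mod. Qed.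

Lemma parity_list_bits v : parity_list v \in tuples [:: 0; 1] 4.
Proof.
have -> : 4%N = size (parity_list v) by rewrite !size_map size_iota.
apply/mem_tuples/allP => _ /mapP[x _ ->].
have := modz_ge0 x (d := 2); have := ltz_pmod x (d := 2); rewrite !inE; lia.
Qed.

Lemma dvdz_eqmod d x y : (x == y %[mod d])%Z -> (d %| x)%Z = (d %| y)%Z.
Proof. by move=> /eqP xy; rewrite -(subr0 x) -(subr0 y) -!eqz_mod_dvd xy. Qed.

Lemma parity_cover r u : ~~ const_mod2 (entries r) -> (2 %| Qf r)%Z -> (2 %| Bf r u)%Z ->
  exists b, eqmodv 2 (lift_comb b *m r) u.
Proof.
move=> r_nc Qr Bru.
have ra := eqmodv_parity r; have uc := eqmodv_parity u.
set a := parity_list r in ra; set c := parity_list u in uc.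
have size_a : size a = 4%N by rewrite !size_map size_iota.
have adm : admissible a c.
  apply/and3P; split.
  - by move: r_nc; rewrite /const_mod2 /a /parity_list /= !modz_mod.
  - by rewrite -(@entries_colv a size_a) -QfE -(dvdz_eqmod (Qf_eqmodv ra)).
  - rewrite -(@entries_colv a size_a) -(@entries_colv c) ?size_map ?size_iota //.
    by rewrite -/(Bf _ _) -(dvdz_eqmod (Bf_eqmodv ra uc)).
have /hasP[b _ reach] := implyP (allP (allP parity_cover_check_true a (parity_list_bits r))
  c (parity_list_bits u)) adm.
exists b; apply: eqmodv_trans (eqmodv_mulmx _ ra) _; apply: eqmodv_trans (eqmodv_sym uc).
move=> j; rewrite lift_comb_mulv mxE eqz_mod_dvd.
by apply: (allP reach); rewrite mem_iota add0n ltn_ord.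
Qed.

Lemma lift_fiber k r u : ~~ const_mod2 (entries r) -> (2 %| Qf r)%Z -> (2 %| Bf r u)%Z ->
  exists2 h, inA h & eqmodv (2 * (2 ^+ k * 8)) (h *m r) (r + (2 ^+ k * 8) *: u).
Proof.
move=> r_nc Qr Bru; have [b Xr_u] := parity_cover r_nc Qr Bru.
pose h := \prod_(i < 6) (lift_mx i ^+ (2 ^ k)) ^+ nth 0 b i.
exists h.
  apply: big_ind => [|g g'|i _]; [exact: inA1 | exact: inA_mul |].
  exact/inA_expn/inA_expn/lift_mx_inA.
have d2 : (2 %| 2 ^+ k * 8)%Z by apply: dvdz_mull.
have h_congr : mx_congr1 (2 ^+ k * 8) (lift_comb b) h.
  apply: mx_congr1_big => // i; apply: mx_congr1_expn => //; apply: mx_congr1_expn2 => //.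
  by exists 0; rewrite lift_mxE scaler0 addr0.
apply: eqmodv_trans (mx_congr1_mulv r h_congr) _; apply: eqmodv_addl.
by rewrite mulrC; apply: eqmodv_scale.
Qed.

Lemma dvdz_prime_sqr (p : nat) (w : int) : prime p -> (p %| w ^+ 2)%Z -> (p %| w)%Z.
Proof. by move=> pp; rewrite /dvdz !unfold_in /= abszX Euclid_dvdX // => /andP[]. Qed.

Lemma primitive_root_not_const_mod2 k1 k2 k3 k1' k2' k3' w :
  k1 + k1' = 2 * w -> k2 + k2' = 2 * w -> k3 + k3' = 2 * w ->
  Qf (vec4 k1 k2 k3 w) = 0 -> foldr gcdz 0 [:: k1; k2; k3; k1'; k2'; k3'] = 1 ->
  ~~ const_mod2 [:: k1; k2; k3; w].
Proof.
move=> E1 E2 E3 Q0 prim; apply/negP => /and3P[].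
rewrite /= !eqz_mod_dvd => /dvdzP[t1 e1] /dvdzP[t2 e2] /dvdzP[t3 e3].
have w_even : (2 %| w)%Z.
  apply: (@dvdz_prime_sqr 2) => //; apply/dvdzP; exists (t1 ^+ 2 + t2 ^+ 2 + t3 ^+ 2).
  move: Q0; rewrite QfE entries_colv // /qform /=.
  rewrite -[k1](subrK w) -[k2](subrK w) -[k3](subrK w) e1 e2 e3 => Q0.
  (* With [k_i = w + 2 t_i], Q = 4 (t_1^2 + t_2^2 + t_3^2) - 2 w^2. *)
  have : -2 * (w ^+ 2 - (t1 ^+ 2 + t2 ^+ 2 + t3 ^+ 2) * 2) = 0 by rewrite -Q0; ring.
  by move/eqP; rewrite mulf_eq0 /= subr_eq0 => /eqP.
suff : (2 %| foldr gcdz 0 [:: k1; k2; k3; k1'; k2'; k3'])%Z by rewrite prim.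
rewrite /= !dvdz_gcd dvdz0 andbT.
have k_even (k t : int) : k - w = t * 2 -> (2 %| k)%Z.
  by move=> e; rewrite -(subrK w k) e rpredD // dvdz_mull.
have k'_even (k k' t : int) : k + k' = 2 * w -> k - w = t * 2 -> (2 %| k')%Z.
  move=> e e'; rewrite (_ : k' = 2 * w - k); last by rewrite -e addrC addKr.
  by rewrite rpredB ?dvdz_mulr ?(k_even k t).
by rewrite (k_even _ _ e1) (k_even _ _ e2) (k_even _ _ e3) (k'_even _ _ _ E1 e1)
  (k'_even _ _ _ E2 e2) (k'_even _ _ _ E3 e3).
Qed.

Lemma Bf_even_of_lift d r u : (4 %| d)%Z -> d != 0 -> Qf r = 0 ->
  (4 * d %| Qf (r + d *: u))%Z -> (2 %| Bf r u)%Z.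
Proof.
case/dvdzP=> e ->{d}; rewrite mulf_eq0 orbF => e0 Q0.
have -> : Qf (r + (e * 4) *: u) = (8 * e) * (Bf r u + 2 * e * Qf u).
  by rewrite QfDZ Q0; ring.
rewrite (_ : 4 * (e * 4) = (8 * e) * 2); last by ring.
rewrite dvdz_mul2l ?mulf_neq0 // => Bu.
rewrite (_ : Bf r u = Bf r u + 2 * e * Qf u - 2 * (e * Qf u)); last by ring.
by rewrite rpredB // dvdz_mulr.
Qed.

Lemma inV_lift k r x : Qf r = 0 -> ~~ const_mod2 (entries r) ->
  inV r (2 ^+ k * 8) x ->
  (exists w0, eqmodv (2 * (2 ^+ k * 8)) w0 x /\ (4 * (2 ^+ k * 8) %| Qf w0)%Z) ->
  inV r (2 * (2 ^+ k * 8)) x.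
Proof.
move=> Q0 r_nc [g gA grx] [w0 [w0x Qw0]].
have [g' g'A [g'g gg']] := inA_inverse gA.
have w0_gr : eqmodv (2 ^+ k * 8) w0 (g *m r).
  exact: eqmodv_trans (eqmodv_dvd (dvdz_mull _ (dvdzz _)) w0x) (eqmodv_sym grx).
have [u g'w0] : exists u, g' *m w0 = r + (2 ^+ k * 8) *: u.
  by apply/eqmodvP; move: (eqmodv_mulmx g' w0_gr); rewrite mulmxA mulmxE g'g -idmxE mul1mx.
have Bru : (2 %| Bf r u)%Z.
  apply: (Bf_even_of_lift (d := 2 ^+ k * 8)) => //; first exact: dvdz_mull.
    by rewrite mulf_neq0 // expf_neq0.
  by rewrite -g'w0 inA_Qf.
have Qr : (2 %| Qf r)%Z by rewrite Q0 dvdz0.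
have [h hA hr] := lift_fiber k r_nc Qr Bru.
exists (g * h); first exact: inA_mul.
rewrite -mulmxE -mulmxA; apply: eqmodv_trans (eqmodv_mulmx g hr) _.
by rewrite -g'w0 mulmxA mulmxE gg' -idmxE mul1mx.
Qed.

Theorem lemma2p9 (k1 k2 k3 k1' k2' k3' w : int) :
  k1 + k1' = 2 * w -> k2 + k2' = 2 * w -> k3 + k3' = 2 * w ->
  Qf (vec4 k1 k2 k3 w) = 0 ->
  foldr gcdz 0 [:: k1; k2; k3; k1'; k2'; k3'] = 1 ->
  forall m : nat, (3 <= m)%N ->
  forall x : 'cV[int]_4,
    (inC m.+1 x /\ inV (vec4 k1 k2 k3 w) (2 ^ m)%:Z x)
    <-> inV (vec4 k1 k2 k3 w) (2 ^ m.+1)%:Z x.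
Proof.
move=> E1 E2 E3 Q0 prim m m3 x; set r := vec4 k1 k2 k3 w.
have r_nc : ~~ const_mod2 (entries r).
  rewrite (@entries_colv [:: k1; k2; k3; w]) //.
  exact: primitive_root_not_const_mod2 E1 E2 E3 Q0 prim.
case: m m3 => [|[|[|k]]] // _.
have pow2 j : (2 ^ j.+3)%:Z = 2 ^+ j * 8 by rewrite -natz natrX !exprS; ring.
have e1 : (2 : int) ^+ k.+1 * 8 = 2 * (2 ^+ k * 8) by rewrite exprS mulrA.
have e2 : (2 : int) ^+ k.+2 * 8 = 4 * (2 ^+ k * 8) by rewrite exprS -mulrA e1 mulrA.
rewrite /inC !pow2 e1 e2.
split=> [[[w0 [w0x Qw0]] xV] | xV].
  apply: inV_lift => //; exists w0; split=> //.
  by move: Qw0; rewrite eqz_mod_dvd subr0.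
have [g gA grx] := xV; split.
  by exists (g *m r); split; rewrite // inA_Qf // Q0.
by exists g => //; apply: eqmodv_dvd grx; exact: dvdz_mull.
Qed.
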